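(* Let $M$ be a monoid and let $\chi=(r_0,T,\alpha,\theta)$ be an elliptic $M$-tree. Define $D_\chi:M\times M\to\overline{\mathbb N}$ by $D_\chi(m,m')=|\alpha m\wedge\alpha m'|$. Then: (i) $D_\chi$ is a length function for $M$; (ii) if $\mathrm{dep}(r_0,T)=l\in\mathbb N$, then the function $d(m,m')=2l-2D_\chi(m,m')$ satisfies $d(m,m')=d_T(\alpha_l m,\alpha_l m')$; (iii) if $\mathrm{dep}(r_0,T)=l\in\mathbb N$ and $\chi$ is strongly faithful, then $d$ is an ultrametric (in particular $d(m,m')=0$ implies $m=m'$).
   Context: $\overline{\mathbb N}=\mathbb N\cup\{\omega\}$. Rooted tree $(r_0,T)$: tree with root $r_0$, $\mathrm{dep}(v)=d_T(r_0,v)$, $\mathrm{dep}(r_0,T)=\sup_v\mathrm{dep}(v)$. A ray is either a geodesic $(\alpha_l,\dots,\alpha_1,\alpha_0=r_0)$ (length $|\alpha|=l$) or an infinite path $(\dots,\alpha_1,\alpha_0=r_0)$ with $\mathrm{dep}(\alpha_i)=i$ (length $\omega$); $\alpha\le\beta$ if $|\alpha|\le|\beta|$ and $\alpha_i=\beta_i$ for all $i\le|\alpha|$; maximal rays are maximal for $\le$; $(r_0,T)$ is uniform if all maximal rays have the same length. $\alpha\wedge\beta$ is the longest common initial segment of $\alpha$ and $\beta$ (equal to $\alpha$ if $\alpha=\beta$). Elliptic contractions are depth-preserving, distance-non-increasing maps of vertices; $\mathrm{Ell}(r_0,T)$ is their monoid. An elliptic action is a monoid homomorphism $\theta:M\to\mathrm{Ell}(r_0,T)$,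 written $v\mapsto vm$, extended to rays by $\alpha m=(\dots,\alpha_1m,\alpha_0m)$. An elliptic $M$-tree is $\chi=(r_0,T,\alpha,\theta)$ with $(r_0,T)$ uniform, $\alpha$ a maximal ray and $\theta$ an elliptic action that is $\alpha$-transitive: $\mathrm{Vert}(T)=\bigcup_i\alpha_iM$. It is strongly faithful if $\alpha m=\alpha m'$ implies $m=m'$. A length function for $M$ is $D:M\times M\to\overline{\mathbb N}$ with (L1) $D(m,m')=D(m',m)$; (L2) $D(m',m'')\le D(m,m)$; (L3) $D(m',m'')\le D(m'm,m''m)$; (L4) $D(m,m'')\ge\min\{D(m,m'),D(m',m'')\}$, for all $m,m',m''$. *)

From Stdlib Require Import Arith Lia Classical ClassicalEpsilon.

Set Implicit Arguments.

Inductive natbar : Type := Fin : nat -> natbar | Omega : natbar.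

Definition nb_le (a b : natbar) : Prop :=
  match a, b with
  | _, Omega => True
  | Omega, Fin _ => False
  | Fin x, Fin y => x <= y
  end.

Definition nb_min (a b : natbar) : natbar :=
  match a, b with
  | Omega, y => y
  | x, Omega => x
  | Fin x, Fin y => Fin (Nat.min x y)
  end.

Section Graph.
Variables (V : Type) (E : V -> V -> Prop).

Definition walk (u v : V) (n : nat) : Prop :=
  exists f : nat -> V, f 0 = u /\ f n = v /\ forall i, i < n -> E (f i) (f (S i)).

Definition dist (u v : V) : nat :=
  epsilon (inhabits 0) (fun n => walk u v n /\ forall k, walk u v k -> n <= k).

Definition is_tree : Prop :=
  (forall u v, E u v -> E v u) /\
  (forall u, ~ E u u) /\
  (forall u v, exists n, walk u v n) /\
  (forall (n : nat) (f : nat -> V), 3 <= n -> f 0 = f n ->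
      (forall i, i < n -> E (f i) (f (S i))) ->
      (forall i j, i < j < n -> f i <> f j) -> False).

Variable r0 : V.

Definition dep (v : V) : nat := dist r0 v.

(* dep(r0,T) = sup_v dep v equals the finite value l *)
Definition tree_depth_eq (l : nat) : Prop :=
  (forall v, dep v <= l) /\ (exists v, dep v = l).

(* Rays.  A ray is a length |alpha| in N-bar together with the vertices
   alpha_i (the values at indices i > |alpha| are irrelevant).          *)
Record ray : Type := Ray { rlen : natbar; rf : nat -> V }.

Definition is_ray (a : ray) : Prop :=
  rf a 0 = r0 /\
  match rlen a with
  | Fin l =>
      (forall i, i < l -> E (rf a (S i)) (rf a i)) /\ dist (rf a l) (rf a 0) = l
  | Omega =>
      (forall i, E (rf a (S i)) (rf a i)) /\ (forall i, dep (rf a i) = i)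
  end.

Definition ray_le (a b : ray) : Prop :=
  nb_le (rlen a) (rlen b) /\ (forall i, nb_le (Fin i) (rlen a) -> rf a i = rf b i).

Definition ray_eq (a b : ray) : Prop := ray_le a b /\ ray_le b a.

Definition maximal_ray (a : ray) : Prop :=
  is_ray a /\ forall b, is_ray b -> ray_le a b -> ray_le b a.

Definition uniform : Prop :=
  forall a b, maximal_ray a -> maximal_ray b -> rlen a = rlen b.

(* |alpha /\ beta| : length of the longest common initial segment *)
Definition agree (a b : ray) (i : nat) : Prop :=
  nb_le (Fin i) (rlen a) /\ nb_le (Fin i) (rlen b) /\
  (forall j, j <= i -> rf a j = rf b j).

Definition meet_len (a b : ray) : natbar :=
  match excluded_middle_informative (forall i, agree a b i) with
  | left _ => Omega
  | right _ => Fin (epsilon (inhabits 0) (fun n => agree a b n /\ ~ agree a b (S n)))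
  end.

Definition elliptic_contraction (f : V -> V) : Prop :=
  (forall v, dep (f v) = dep v) /\ (forall u v, dist (f u) (f v) <= dist u v).

End Graph.

Definition ray_act (V : Type) (a : ray V) (g : V -> V) : ray V :=
  Ray (rlen a) (fun i => g (rf a i)).

Definition is_monoid (M : Type) (mul : M -> M -> M) (one : M) : Prop :=
  (forall x y z, mul x (mul y z) = mul (mul x y) z) /\
  (forall x, mul one x = x) /\ (forall x, mul x one = x).

(* An elliptic action theta : M -> Ell(r0,T), written v |-> v m = theta m v;
   a monoid homomorphism for the right-action convention v(mm') = (vm)m'. *)
Definition elliptic_action (V : Type) (E : V -> V -> Prop) (r0 : V)
    (M : Type) (mul : M -> M -> M) (one : M) (theta : M -> V -> V) : Prop :=
  (forall m, elliptic_contraction E r0 (theta m)) /\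
  (forall v, theta one v = v) /\
  (forall m m' v, theta (mul m m') v = theta m' (theta m v)).

Definition elliptic_M_tree (V : Type) (E : V -> V -> Prop) (r0 : V)
    (M : Type) (mul : M -> M -> M) (one : M)
    (alpha : ray V) (theta : M -> V -> V) : Prop :=
  is_tree E /\ uniform E r0 /\ maximal_ray E r0 alpha /\
  elliptic_action E r0 mul one theta /\
  (forall v, exists i m, nb_le (Fin i) (rlen alpha) /\ v = theta m (rf alpha i)).

Definition strongly_faithful (V : Type) (M : Type) (alpha : ray V)
    (theta : M -> V -> V) : Prop :=
  forall m m', ray_eq (ray_act alpha (theta m)) (ray_act alpha (theta m')) -> m = m'.

Definition D_chi (V : Type) (M : Type) (alpha : ray V) (theta : M -> V -> V)
    (m m' : M) : natbar :=
  meet_len (ray_act alpha (theta m)) (ray_act alpha (theta m')).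

(* length functions (L1)-(L4) *)
Definition length_function (M : Type) (mul : M -> M -> M)
    (D : M -> M -> natbar) : Prop :=
  (forall m m', D m m' = D m' m) /\
  (forall m m' m'', nb_le (D m' m'') (D m m)) /\
  (forall m m' m'', nb_le (D m' m'') (D (mul m' m) (mul m'' m))) /\
  (forall m m' m'', nb_le (nb_min (D m m') (D m' m'')) (D m m'')).

(* d(m,m') = 2l - 2 D(m,m')  (only meaningful when D(m,m') is finite) *)
Definition d_of (M : Type) (l : nat) (D : M -> M -> natbar) (m m' : M) : nat :=
  match D m m' with Fin k => 2 * l - 2 * k | Omega => 0 end.

Definition ultrametric (M : Type) (d : M -> M -> nat) : Prop :=
  (forall m m', d m m' = 0 <-> m = m') /\
  (forall m m', d m m' = d m' m) /\
  (forall m m' m'', d m m'' <= Nat.max (d m m') (d m' m'')).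

(* An elliptic contraction preserves depth and cannot stretch an edge, so it maps the
   geodesic [alpha] from the root to another such geodesic; [D_chi m m'] is the level at
   which [alpha m] and [alpha m'] part, and (L1)-(L4) are properties of common initial
   segments, (L3) because [theta] is a homomorphism.  In a tree every vertex other than the
   root has a unique parent (two parents, or an edge between vertices of equal depth, would
   close a cycle with the two geodesics to the root), so the only way from [alpha_l m] to
   [alpha_l m'] goes up to their meet at depth [D_chi m m'], giving
   [dist = 2l - 2 D_chi m m'].  The ultrametric inequality is (L4), and strong faithfulness
   makes [d] separate points. *)

From Stdlib Require Import Arith Lia Wf_nat Classical ClassicalEpsilon.

Set Implicit Arguments.

Section Walks.
Variables (V : Type) (E : V -> V -> Prop).

Lemma walk0_eq u v : walk E u v 0 -> u = v.
Proof. intros [f [f0 [fn _]]]. congruence. Qed.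

Lemma walk_refl u : walk E u u 0.
Proof. exists (fun _ => u). repeat split; intros; lia. Qed.

Lemma walk1_edge u v : walk E u v 1 -> E u v.
Proof. intros [f [f0 [f1 Hf]]]. specialize (Hf 0 ltac:(lia)). congruence. Qed.

Lemma walk_edge u v : E u v -> walk E u v 1.
Proof.
  intros H. exists (fun i => if i =? 0 then u else v). repeat split.
  intros i Hi. replace i with 0 by lia. exact H.
Qed.

Lemma walk_cat u v w a b : walk E u v a -> walk E v w b -> walk E u w (a + b).
Proof.
  intros [f [f0 [fa Hf]]] [g [g0 [gb Hg]]].
  exists (fun i => if i <=? a then f i else g (i - a)). repeat split.
  - exact f0.
  - destruct (Nat.leb_spec (a + b) a).
    + replace b with 0 in * by lia. rewrite Nat.add_0_r. congruence.
    + replace (a + b - a) with b by lia. exact gb.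
  - intros i Hi. destruct (Nat.leb_spec i a), (Nat.leb_spec (S i) a); try lia.
    + apply Hf; lia.
    + replace i with a by lia. replace (S a - a) with 1 by lia.
      rewrite fa, <- g0. apply Hg. lia.
    + replace (S i - a) with (S (i - a)) by lia. apply Hg. lia.
Qed.

Lemma walk_snoc_inv u v n : walk E u v (S n) -> exists w, walk E u w n /\ E w v.
Proof.
  intros [f [f0 [fn Hf]]]. exists (f n). split.
  - exists f. repeat split; auto.
  - rewrite <- fn. apply Hf. lia.
Qed.

Lemma walk_down_path (c : nat -> V) s i j :
  (forall k, k < s -> E (c (S k)) (c k)) -> i <= j -> j <= s -> walk E (c j) (c i) (j - i).
Proof.
  intros Hc Hij Hjs. exists (fun t => c (j - t)). repeat split.
  - now rewrite Nat.sub_0_r.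
  - f_equal; lia.
  - intros t Ht. replace (j - t) with (S (j - S t)) by lia. apply Hc. lia.
Qed.

Hypothesis Esym : forall u v, E u v -> E v u.

Lemma walk_rev u v n : walk E u v n -> walk E v u n.
Proof.
  intros [f [f0 [fn Hf]]]. exists (fun i => f (n - i)). repeat split.
  - now rewrite Nat.sub_0_r.
  - now rewrite Nat.sub_diag.
  - intros i Hi. apply Esym. replace (n - i) with (S (n - S i)) by lia. apply Hf. lia.
Qed.

Hypothesis Econn : forall u v, exists n, walk E u v n.

Lemma dist_spec u v : walk E u v (dist E u v) /\ forall k, walk E u v k -> dist E u v <= k.
Proof.
  unfold dist. apply epsilon_spec.
  destruct (dec_inh_nat_subset_has_unique_least_element (walk E u v)
              (fun n => classic _) (Econn u v)) as [n [Hn _]].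
  now exists n.
Qed.

Lemma dist_walk u v : walk E u v (dist E u v).
Proof. apply dist_spec. Qed.

Lemma dist_le u v k : walk E u v k -> dist E u v <= k.
Proof. apply dist_spec. Qed.

Lemma dist_sym u v : dist E u v = dist E v u.
Proof. apply Nat.le_antisymm; apply dist_le, walk_rev, dist_walk. Qed.

Lemma dist_triangle u v w : dist E u w <= dist E u v + dist E v w.
Proof. apply dist_le, walk_cat with v; apply dist_walk. Qed.

Lemma dist_refl u : dist E u u = 0.
Proof. pose proof (dist_le (walk_refl u)). lia. Qed.

Lemma dist_eq0 u v : dist E u v = 0 -> u = v.
Proof. intros H. apply walk0_eq. rewrite <- H. apply dist_walk. Qed.

Lemma dist_edge u v : E u v -> dist E u v <= 1.
Proof. intros H. now apply dist_le, walk_edge. Qed.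

Lemma dist1_edge u v : dist E u v = 1 -> E u v.
Proof. intros H. apply walk1_edge. rewrite <- H. apply dist_walk. Qed.

End Walks.

Lemma last_agreement (A : Type) (a b : nat -> A) s : a 0 = b 0 ->
  exists j, j <= s /\ a j = b j /\ forall i, j < i <= s -> a i <> b i.
Proof.
  intros H0. induction s as [|s [j [Hj [Hab Hne]]]].
  - exists 0. repeat split; auto. intros; lia.
  - destruct (classic (a (S s) = b (S s))).
    + exists (S s). repeat split; auto. intros; lia.
    + exists j. repeat split; auto.
      intros i Hi. destruct (Nat.eq_dec i (S s)) as [->|]; auto. apply Hne. lia.
Qed.

Section RootPaths.
Variables (V : Type) (E : V -> V -> Prop) (r0 : V).
Hypothesis Esym : forall u v, E u v -> E v u.
Hypothesis Econn : forall u v, exists n, walk E u v n.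

Local Notation depth := (dep E r0).

Lemma depth_eq0 v : depth v = 0 -> v = r0.
Proof. intros H. symmetry. now apply (dist_eq0 Econn). Qed.

Lemma depth_edge u v : E u v -> depth v <= S (depth u).
Proof.
  intros H. pose proof (dist_triangle Econn r0 u v). pose proof (dist_edge Econn _ _ H).
  unfold dep. lia.
Qed.

Definition root_path (c : nat -> V) (s : nat) : Prop :=
  (forall i, i <= s -> depth (c i) = i) /\ (forall i, i < s -> E (c (S i)) (c i)).

Definition ancestors (c : nat -> V) (v : V) : Prop :=
  root_path c (depth v) /\ c (depth v) = v.

Lemma root_path_le c s t : root_path c s -> t <= s -> root_path c t.
Proof. intros [H1 H2] Ht. split; intros; [apply H1 | apply H2]; lia. Qed.

Lemma ancestors_exist v : exists c, ancestors c v.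
Proof.
  destruct (dist_walk Econn r0 v) as [f [f0 [fn Hf]]]. fold (depth v) in fn, Hf.
  set (n := depth v) in *.
  exists f. split; [split|exact fn].
  - intros i Hi. apply Nat.le_antisymm.
    + apply (dist_le Econn). exists f. repeat split; auto. intros; apply Hf; lia.
    + assert (W : walk E (f i) v (n - i)).
      { exists (fun t => f (i + t)). repeat split.
        - f_equal; lia.
        - rewrite <- fn. f_equal; lia.
        - intros t Ht. replace (i + S t) with (S (i + t)) by lia. apply Hf. lia. }
      pose proof (dist_le Econn W). pose proof (dist_triangle Econn r0 (f i) v).
      unfold dep in *. lia.
  - intros i Hi. apply Esym, Hf, Hi.
Qed.

Lemma ray_root_path a l : is_ray E r0 a -> rlen a = Fin l -> root_path (rf a) l.
Proof.
  intros [Ha0 Ha] Hl. rewrite Hl in Ha. destruct Ha as [Ea Da].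
  split; auto. intros i Hi. unfold dep. rewrite (dist_sym Esym Econn), <- Ha0.
  pose proof (dist_le Econn (walk_down_path _ _ Ea (Nat.le_0_l i) Hi)).
  pose proof (dist_le Econn (walk_down_path _ _ Ea Hi (le_n l))).
  pose proof (dist_triangle Econn (rf a l) (rf a i) (rf a 0)).
  lia.
Qed.

Lemma root_path_maximal_ray c l :
  (forall v, depth v <= l) -> root_path c l -> maximal_ray E r0 (Ray (Fin l) c).
Proof.
  intros Hall [Dc Ec].
  assert (Hc0 : c 0 = r0) by (apply depth_eq0, Dc; lia).
  split.
  - split; [exact Hc0|]. split; [exact Ec|]. simpl.
    rewrite Hc0, (dist_sym Esym Econn). apply Dc. lia.
  - intros b [Hb0 Hb] [Hle Hagr]. simpl in Hle, Hagr.
    destruct (rlen b) as [k|] eqn:Hk.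
    + destruct Hb as [_ Hdk]. rewrite Hb0, (dist_sym Esym Econn) in Hdk.
      pose proof (Hall (rf b k)) as Hkl. unfold dep in Hkl.
      split; rewrite Hk; simpl; [lia|].
      intros i Hi. symmetry. apply Hagr. lia.
    + destruct Hb as [_ Hdk]. pose proof (Hall (rf b (S l))). rewrite Hdk in *. lia.
Qed.

Lemma root_path_contraction f c s :
  elliptic_contraction E r0 f -> root_path c s -> root_path (fun i => f (c i)) s.
Proof.
  intros [Hdep Hdist] [Dc Ec]. split.
  - intros i Hi. rewrite Hdep. auto.
  - intros i Hi. apply (dist1_edge Econn).
    assert (Hpos : dist E (f (c (S i))) (f (c i)) <> 0).
    { intros H0. apply (dist_eq0 Econn), (f_equal depth) in H0.
      rewrite !Hdep, !Dc in H0; lia. }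
    pose proof (Hdist (c (S i)) (c i)). pose proof (dist_edge Econn _ _ (Ec i Hi)). lia.
Qed.

Hypothesis Eirr : forall u, ~ E u u.
Hypothesis Hacyc : forall (n : nat) (f : nat -> V), 3 <= n -> f 0 = f n ->
  (forall i, i < n -> E (f i) (f (S i))) ->
  (forall i j, i < j < n -> f i <> f j) -> False.

Section Bridge.
Variables (a b g : nat -> V) (s e j : nat).
Hypotheses (Ha : root_path a s) (Hb : root_path b s).
Hypotheses (Hj : a j = b j) (Hjs : j < s) (Hsplit : forall i, j < i <= s -> a i <> b i).
Hypotheses (He : 1 <= e <= 2) (Hg0 : g 0 = a s) (Hge : g e = b s).
Hypotheses (Hg : forall i, i < e -> E (g i) (g (S i)))
  (Hgdep : forall i, 0 < i < e -> depth (g i) = S s).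

(* The cycle a_j, ..., a_s = g_0, g_1, ..., g_e = b_s, ..., b_j, of length 2(s - j) + e. *)
Let p := s - j.
Let n := 2 * p + e.
Let cyc i := if i <=? p then a (j + i) else if i <? p + e then g (i - p) else b (j + n - i).

Let cyc_a i : i <= p -> cyc i = a (j + i).
Proof. intros Hi. unfold cyc. destruct (Nat.leb_spec i p); [reflexivity | lia]. Qed.

Let cyc_g i : p <= i <= p + e -> cyc i = g (i - p).
Proof.
  intros Hi. unfold cyc. destruct (Nat.leb_spec i p), (Nat.ltb_spec i (p + e)).
  - replace (i - p) with 0 by lia. rewrite Hg0. f_equal. unfold p. lia.
  - lia.
  - reflexivity.
  - replace (i - p) with e by lia. rewrite Hge. f_equal. unfold n, p. lia.
Qed.

Let cyc_b i : p + e <= i -> cyc i = b (j + n - i).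
Proof.
  intros Hi. unfold cyc. destruct (Nat.leb_spec i p), (Nat.ltb_spec i (p + e)); lia || reflexivity.
Qed.

Let cyc_edge i : i < n -> E (cyc i) (cyc (S i)).
Proof.
  intros Hi. destruct Ha as [_ Ea], Hb as [_ Eb].
  destruct (Nat.lt_ge_cases i p); [|destruct (Nat.lt_ge_cases i (p + e))].
  - rewrite !cyc_a by lia. replace (j + S i) with (S (j + i)) by lia. apply Esym, Ea. unfold p in *. lia.
  - rewrite !cyc_g by lia. replace (S i - p) with (S (i - p)) by lia. apply Hg. lia.
  - rewrite !cyc_b by lia. replace (j + n - i) with (S (j + n - S i)) by lia.
    apply Eb. unfold n, p in *. lia.
Qed.

Let cyc_depth i : i < n ->
  depth (cyc i) = if i <=? p then j + i else if i <? p + e then S s else j + n - i.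
Proof.
  intros Hi. destruct Ha as [Da _], Hb as [Db _].
  destruct (Nat.leb_spec i p); [|destruct (Nat.ltb_spec i (p + e))].
  - rewrite cyc_a by lia. apply Da. unfold p in *. lia.
  - rewrite cyc_g by lia. apply Hgdep. lia.
  - rewrite cyc_b by lia. apply Db. unfold n, p in *. lia.
Qed.

Lemma bridge_absurd : False.
Proof.
  apply (@Hacyc n cyc).
  - unfold n, p. lia.
  - rewrite cyc_a, cyc_b by (unfold n; lia). rewrite Nat.add_0_r, Nat.add_sub. exact Hj.
  - exact cyc_edge.
  - intros i i' Hii' Heq.
    pose proof (@cyc_depth i ltac:(lia)) as D1. pose proof (@cyc_depth i' ltac:(lia)) as D2.
    rewrite Heq, D2 in D1.
    destruct (Nat.leb_spec i p), (Nat.ltb_spec i (p + e)),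
             (Nat.leb_spec i' p), (Nat.ltb_spec i' (p + e));
      try (unfold n, p in *; lia).
    (* the only coincidence of depths: a_(j+i) on the way up and b_(j+i) on the way down *)
    all: rewrite cyc_a in Heq by (unfold p; lia); rewrite cyc_b in Heq by (unfold n, p; lia);
      replace (j + n - i') with (j + i) in Heq by (unfold n, p; lia);
      apply (@Hsplit (j + i)); [lia | exact Heq].
Qed.

End Bridge.

Lemma root_paths_bridge_absurd a b g s e :
  root_path a s -> root_path b s -> a s <> b s -> 1 <= e <= 2 ->
  g 0 = a s -> g e = b s -> (forall i, i < e -> E (g i) (g (S i))) ->
  (forall i, 0 < i < e -> depth (g i) = S s) -> False.
Proof.
  intros Ha Hb Hab He Hg0 Hge Hg Hgdep.
  assert (Hab0 : a 0 = b 0).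
  { rewrite (depth_eq0 (a 0)), (depth_eq0 (b 0)); auto; [apply Hb | apply Ha]; lia. }
  destruct (last_agreement a b s Hab0) as [j [Hjs [Hj Hsplit]]].
  assert (j <> s) by congruence.
  apply (@bridge_absurd a b g s e j); auto; lia.
Qed.

Lemma edge_depth_neq u w : E u w -> depth u <> depth w.
Proof.
  intros H Hd. destruct (ancestors_exist u) as [a [Ha Au]].
  destruct (ancestors_exist w) as [b [Hb Bw]]. rewrite <- Hd in Hb, Bw.
  apply (@root_paths_bridge_absurd a b (fun i => if i =? 0 then u else w) (depth u) 1);
    auto; try (intros; lia).
  - rewrite Au, Bw. intros <-. exact (Eirr H).
  - intros i Hi. replace i with 0 by lia. exact H.
Qed.

Lemma edge_depth u v : E u v -> depth v = S (depth u) \/ depth u = S (depth v).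
Proof.
  intros H. pose proof (depth_edge H). pose proof (depth_edge (Esym H)).
  pose proof (edge_depth_neq H). lia.
Qed.

Lemma parent_unique v u u' : E v u -> E v u' -> depth u = depth u' ->
  depth v = S (depth u) -> u = u'.
Proof.
  intros H1 H2 Hd Hv. apply NNPP. intros Hne.
  destruct (ancestors_exist u) as [a [Ha Au]].
  destruct (ancestors_exist u') as [b [Hb Bu]]. rewrite <- Hd in Hb, Bu.
  apply (@root_paths_bridge_absurd a b
           (fun i => if i =? 0 then u else if i =? 1 then v else u') (depth u) 2); auto.
  - congruence.
  - intros i Hi. destruct i as [|[|]]; simpl; auto; lia.
  - intros i Hi. replace i with 1 by lia. auto.
Qed.

Lemma root_path_unique c c' s : root_path c s -> root_path c' s -> c s = c' s ->
  forall i, i <= s -> c i = c' i.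
Proof.
  intros [D1 E1] [D2 E2] Hs.
  assert (K : forall t, t <= s -> c (s - t) = c' (s - t)).
  { induction t as [|t IH]; intros Ht.
    - now rewrite Nat.sub_0_r.
    - assert (Hx : s - t = S (s - S t)) by lia. rewrite Hx in IH.
      apply (@parent_unique (c (S (s - S t)))).
      + apply E1; lia.
      + rewrite IH by lia. apply E2; lia.
      + rewrite D1, D2; lia.
      + rewrite !D1; lia. }
  intros i Hi. replace i with (s - (s - i)) by lia. apply K. lia.
Qed.

Lemma ancestors_child u v cu cv : E u v -> depth v = S (depth u) ->
  ancestors cv v -> ancestors cu u -> forall i, i <= depth u -> cv i = cu i.
Proof.
  intros H Hd [Cv Vv] [Cu Uu].
  apply (@root_path_unique _ _ (depth u)); auto.
  - apply (@root_path_le _ (depth v)); auto; lia.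
  - rewrite Uu. destruct Cv as [Dv Ev]. apply (@parent_unique v).
    + rewrite <- Vv at 1. rewrite Hd. apply Ev. lia.
    + now apply Esym.
    + rewrite Dv; lia.
    + rewrite Dv; lia.
Qed.

(* In a tree, [depth x + depth y - 2 c] is the distance when [c] is the depth of the
   meet of [x] and [y]; moving [y] along an edge changes this quantity by one. *)
Lemma walk_length_ge x cx : ancestors cx x ->
  forall n y cy, walk E x y n -> ancestors cy y ->
  forall c, (forall i, c < i -> i <= depth x -> i <= depth y -> cx i <> cy i) ->
  depth x + depth y <= n + 2 * c.
Proof.
  intros Hx n. induction n as [|n IH]; intros y cy W Hy c Hc.
  - apply walk0_eq in W as <-.
    destruct (Nat.le_gt_cases (depth x) c); [lia|].
    exfalso. apply (Hc (depth x)); auto. now rewrite (proj2 Hx), (proj2 Hy).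
  - destruct (walk_snoc_inv W) as [u [Wu Huy]].
    destruct (ancestors_exist u) as [cu Hu].
    assert (Hcu_top : cu (depth u) = u) by apply Hu.
    destruct (edge_depth Huy) as [Hd|Hd].
    + pose proof (ancestors_child Huy Hd Hy Hu) as Agr.
      destruct (Nat.le_gt_cases c (depth u)).
      * enough (depth x + depth u <= n + 2 * c) by lia.
        apply (IH u cu Wu Hu c). intros i Hi Hix Hiu. rewrite <- Agr by lia. apply Hc; lia.
      * enough (depth x + depth u <= n + 2 * depth u) by lia.
        apply (IH u cu Wu Hu (depth u)). intros; lia.
    + pose proof (ancestors_child (Esym Huy) Hd Hu Hy) as Agr.
      destruct (classic (depth u <= depth x /\ cx (depth u) = u)) as [[Hux Hcx]|Hnot].
      * assert (Hmeet : cx (depth y) = cy (depth y)).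
        { rewrite <- Agr by lia. apply (@root_path_unique _ _ (depth u)); auto; try lia.
          - apply (@root_path_le _ (depth x)); [apply Hx | lia].
          - apply Hu.
          - congruence. }
        assert (depth y <= c) by (destruct (Nat.le_gt_cases (depth y) c); auto;
                                   exfalso; apply (Hc (depth y)); auto; lia).
        enough (depth x + depth u <= n + 2 * depth u) by lia.
        apply (IH u cu Wu Hu (depth u)). intros; lia.
      * enough (depth x + depth u <= n + 2 * c) by lia.
        apply (IH u cu Wu Hu c). intros i Hi Hix Hiu.
        destruct (Nat.eq_dec i (depth u)) as [->|Hne].
        -- rewrite Hcu_top. intros Heq. apply Hnot. auto.
        -- rewrite Agr by lia. apply Hc; lia.
Qed.

Lemma root_paths_dist p q l k : root_path p l -> root_path q l -> k <= l ->
  (forall i, i <= k -> p i = q i) -> (k < l -> p (S k) <> q (S k)) ->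
  dist E (p l) (q l) = 2 * l - 2 * k.
Proof.
  intros Hp Hq Hk Hagr Hsplit.
  assert (Dp : depth (p l) = l) by (apply Hp; lia).
  assert (Dq : depth (q l) = l) by (apply Hq; lia).
  apply Nat.le_antisymm.
  - apply (dist_le Econn). replace (2 * l - 2 * k) with ((l - k) + (l - k)) by lia.
    apply walk_cat with (p k).
    + apply walk_down_path with l; auto. apply Hp.
    + rewrite Hagr by lia. apply walk_rev; auto. apply walk_down_path with l; auto. apply Hq.
  - enough (depth (p l) + depth (q l) <= dist E (p l) (q l) + 2 * k) by lia.
    apply (walk_length_ge (cx := p)) with (cy := q).
    + split; rewrite Dp; auto.
    + apply (dist_walk Econn).
    + split; rewrite Dq; auto.
    + rewrite Dp, Dq. intros i Hki Hi _ Heq. apply Hsplit; [lia|].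
      apply (@root_path_unique _ _ i); auto; apply (@root_path_le _ l); auto.
Qed.

End RootPaths.

Lemma nb_le_refl x : nb_le x x.
Proof. destruct x; simpl; auto. Qed.

Lemma nb_le_Fin_le j i x : j <= i -> nb_le (Fin i) x -> nb_le (Fin j) x.
Proof. destruct x; simpl; auto; lia. Qed.

Lemma nb_le_Fin x y : (forall i, nb_le (Fin i) x -> nb_le (Fin i) y) -> nb_le x y.
Proof.
  intros H. destruct x as [n|], y as [m|]; simpl; auto.
  - apply (H n). simpl; lia.
  - pose proof (H (S m) I) as Hc. simpl in Hc. lia.
Qed.

Lemma nb_le_antisym x y : nb_le x y -> nb_le y x -> x = y.
Proof. destruct x, y; simpl; intros; try contradiction; auto. f_equal; lia. Qed.

Lemma nb_le_Fin_min i x y : nb_le (Fin i) (nb_min x y) <-> nb_le (Fin i) x /\ nb_le (Fin i) y.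
Proof. destruct x, y; simpl; try tauto. rewrite Nat.min_glb_iff. tauto. Qed.

Lemma agree_le V (a b : ray V) j i : j <= i -> agree a b i -> agree a b j.
Proof.
  intros H [H1 [H2 H3]]. repeat split; try (eapply nb_le_Fin_le; eauto).
  intros; apply H3; lia.
Qed.

Lemma meet_len_spec V (a b : ray V) : agree a b 0 ->
  forall i, nb_le (Fin i) (meet_len a b) <-> agree a b i.
Proof.
  intros H0. unfold meet_len.
  destruct (excluded_middle_informative (forall i, agree a b i)) as [Hall|Hn].
  - intros i; simpl; split; auto.
  - apply not_all_ex_not in Hn as [i0 Hi0].
    assert (Hex : exists n, agree a b n /\ ~ agree a b (S n)).
    { induction i0 as [|i0 IH]; [contradiction|].
      destruct (classic (agree a b i0)); eauto. }
    destruct (epsilon_spec (inhabits 0) _ Hex) as [HN1 HN2].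
    set (N := epsilon _ _) in *.
    intros i. simpl. split.
    + intros Hi. now apply agree_le with N.
    + intros Hi. destruct (Nat.le_gt_cases i N); auto.
      exfalso. apply HN2. apply agree_le with i; auto.
Qed.

Section EllipticTree.
Variables (V : Type) (E : V -> V -> Prop) (r0 : V).
Variables (M : Type) (mul : M -> M -> M) (alpha : ray V) (theta : M -> V -> V).
Hypotheses (Esym : forall u v, E u v -> E v u) (Eirr : forall u, ~ E u u)
  (Econn : forall u v, exists n, walk E u v n)
  (Hacyc : forall (n : nat) (f : nat -> V), 3 <= n -> f 0 = f n ->
     (forall i, i < n -> E (f i) (f (S i))) ->
     (forall i j, i < j < n -> f i <> f j) -> False).
Hypotheses (Hunif : uniform E r0) (Hmax : maximal_ray E r0 alpha).
Hypotheses (Hell : forall m, elliptic_contraction E r0 (theta m))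
  (Hmul : forall m m' v, theta (mul m m') v = theta m' (theta m v)).

Local Notation D := (D_chi alpha theta).
Local Notation act m := (ray_act alpha (theta m)).

Lemma theta_root m : theta m r0 = r0.
Proof.
  apply (depth_eq0 r0 Econn). destruct (Hell m) as [Hdep _].
  rewrite Hdep. apply (dist_refl Econn).
Qed.

Lemma D_chi_spec m m' i : nb_le (Fin i) (D m m') <-> agree (act m) (act m') i.
Proof.
  apply meet_len_spec. repeat split; simpl.
  - destruct (rlen alpha); simpl; auto; lia.
  - destruct (rlen alpha); simpl; auto; lia.
  - intros j Hj. replace j with 0 by lia. now rewrite (proj1 (proj1 Hmax)), !theta_root.
Qed.

Lemma D_chi_le m1 m2 m3 m4 :
  (forall i, agree (act m1) (act m2) i -> agree (act m3) (act m4) i) ->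
  nb_le (D m1 m2) (D m3 m4).
Proof. intros H. apply nb_le_Fin. intros i. rewrite !D_chi_spec. apply H. Qed.

Lemma D_chi_sym m m' : D m m' = D m' m.
Proof.
  apply nb_le_antisym; apply D_chi_le; intros i [H1 [H2 H3]];
    repeat split; auto; intros j Hj; symmetry; auto.
Qed.

Lemma D_chi_le_diag m m' m'' : nb_le (D m' m'') (D m m).
Proof. apply D_chi_le. intros i [H1 _]. now repeat split. Qed.

Lemma D_chi_mulr m m' m'' : nb_le (D m' m'') (D (mul m' m) (mul m'' m)).
Proof.
  apply D_chi_le. intros i [H1 [H2 H3]]. repeat split; auto.
  intros j Hj. simpl in *. now rewrite !Hmul, H3.
Qed.

Lemma D_chi_min m m' m'' : nb_le (nb_min (D m m') (D m' m'')) (D m m'').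
Proof.
  apply nb_le_Fin. intros i. rewrite nb_le_Fin_min, !D_chi_spec.
  intros [[A1 [_ A3]] [_ [B2 B3]]]. repeat split; auto.
  intros j Hj. now rewrite A3, B3.
Qed.

Lemma length_function_D_chi : length_function mul D.
Proof.
  repeat split; [exact D_chi_sym | exact D_chi_le_diag | exact D_chi_mulr | exact D_chi_min].
Qed.

Variable l : nat.
Hypothesis Hdepth : tree_depth_eq E r0 l.

Lemma alpha_length : rlen alpha = Fin l.
Proof.
  destruct Hdepth as [Hall [v Hv]].
  destruct (ancestors_exist r0 Esym Econn v) as [c [Hc Hcv]]. rewrite Hv in Hc.
  now rewrite (Hunif Hmax (root_path_maximal_ray Esym Econn Hall Hc)).
Qed.

Lemma D_chi_Fin m m' : exists k, D m m' = Fin k /\ k <= l /\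
  forall i, i <= k <-> agree (act m) (act m') i.
Proof.
  destruct (D m m') as [k|] eqn:HD.
  - exists k. split; [reflexivity|]. split.
    + destruct (proj1 (D_chi_spec m m' k)) as [Hk _]; [rewrite HD; simpl; lia|].
      simpl in Hk. now rewrite alpha_length in Hk.
    + intros i. rewrite <- D_chi_spec, HD. simpl. tauto.
  - destruct (proj1 (D_chi_spec m m' (S l))) as [Hl _]; [now rewrite HD|].
    simpl in Hl. rewrite alpha_length in Hl. simpl in Hl. lia.
Qed.

Lemma D_chi_neq_Omega m m' : D m m' <> Omega.
Proof. destruct (D_chi_Fin m m') as [k [-> _]]. discriminate. Qed.

Lemma d_of_dist m m' : d_of l D m m' = dist E (theta m (rf alpha l)) (theta m' (rf alpha l)).
Proof.
  destruct (D_chi_Fin m m') as [k [Hk [Hkl Hagr]]]. unfold d_of. rewrite Hk.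
  pose proof (ray_root_path Esym Econn (proj1 Hmax) alpha_length) as Halpha.
  symmetry. apply (root_paths_dist (r0 := r0) Esym Econn Eirr Hacyc
                     (p := fun i => theta m (rf alpha i)) (q := fun i => theta m' (rf alpha i)));
    try apply (root_path_contraction Econn (Hell _) Halpha); auto.
  - intros i Hi. destruct (proj1 (Hagr i) Hi) as [_ [_ H3]]. now apply H3.
  - intros Hkl' Hsplit. enough (S k <= k) by lia. apply Hagr.
    destruct (proj1 (Hagr k) (le_n k)) as [_ [_ H3]].
    unfold agree; simpl; rewrite alpha_length. repeat split; simpl; try lia.
    intros j Hj. destruct (Nat.eq_dec j (S k)) as [->|]; [exact Hsplit | apply H3; lia].
Qed.

Lemma d_of_ultrametric : strongly_faithful alpha theta -> ultrametric (d_of l D).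
Proof.
  intros Hsf. split; [|split].
  - intros m m'. destruct (D_chi_Fin m m') as [k [Hk [Hkl Hagr]]]. unfold d_of. rewrite Hk.
    split.
    + intros H0. replace k with l in Hagr by lia.
      destruct (proj1 (Hagr l) (le_n l)) as [_ [_ H3]].
      apply Hsf. split; split; simpl; try apply nb_le_refl;
        intros i Hi; rewrite alpha_length in Hi; simpl in Hi; [|symmetry]; now apply H3.
    + intros <-. enough (l <= k) by lia. apply Hagr.
      unfold agree; simpl; rewrite alpha_length. now repeat split.
  - intros m m'. unfold d_of. now rewrite D_chi_sym.
  - intros m m' m''. pose proof (D_chi_min m m' m'') as Hmin.
    destruct (D_chi_Fin m m') as [k1 [Hk1 _]], (D_chi_Fin m' m'') as [k2 [Hk2 _]],
             (D_chi_Fin m m'') as [k3 [Hk3 _]].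
    rewrite Hk1, Hk2, Hk3 in Hmin. simpl in Hmin.
    unfold d_of. rewrite Hk1, Hk2, Hk3. lia.
Qed.

End EllipticTree.

Theorem proposition4p5
  (V : Type) (E : V -> V -> Prop) (r0 : V)
  (M : Type) (mul : M -> M -> M) (one : M)
  (alpha : ray V) (theta : M -> V -> V)
  (HM : is_monoid mul one)
  (Hchi : elliptic_M_tree E r0 mul one alpha theta) :
  (* (i) *)
  length_function mul (D_chi alpha theta) /\
  (* (ii) *)
  (forall l : nat, tree_depth_eq E r0 l ->
     forall m m' : M,
       D_chi alpha theta m m' <> Omega /\
       d_of l (D_chi alpha theta) m m'
         = dist E (theta m (rf alpha l)) (theta m' (rf alpha l))) /\
  (* (iii) *)
  (forall l : nat, tree_depth_eq E r0 l ->
     strongly_faithful alpha theta ->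
     ultrametric (d_of l (D_chi alpha theta))).
Proof.
  destruct Hchi as [[Esym [Eirr [Econn Hacyc]]] [Hunif [Hmax [[Hell [_ Hmul]] _]]]].
  split; [|split].
  - exact (length_function_D_chi mul theta Econn Hmax Hell Hmul).
  - intros l Hl m m'. split.
    + exact (D_chi_neq_Omega theta Esym Econn Hunif Hmax Hell Hl m m').
    + exact (d_of_dist theta Esym Eirr Econn Hacyc Hunif Hmax Hell Hl m m').
  - intros l Hl.
    exact (d_of_ultrametric Esym Econn Hunif Hmax Hell Hl).
Qed.
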